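(* Under the standing setup, let $u\in\widetilde X\setminus\overline X$, let $z^*$ be as in the hypothesis below, set $r_u=\min\{1,\frac{\varepsilon\|u-u_{NN}\|}{480}\}$, and for $v\in B(u,r_u)\cap\widetilde X$ set $\delta_v=\frac{240\|u-v\|}{\varepsilon\|u-u_{NN}\|}$ and $z_v=(1-\delta_v)\beta(u)+\delta_vz^*$. Then $\tilde g_i(z_v,v)\le0$ for all $i=1,\ldots,2\ell$, i.e., $z_v\in\widetilde F_v$ (in particular $\|\beta(v)\|\le\|z_v\|$).
   Context: Norms are Euclidean; $B(x,r)$ is the open ball. Standing setup: $X\subseteq\mathbb{R}^d$ has reach $\tau_X>0$, where $\tau_X=\sup\{t\ge0:\text{every }x\text{ with }d(x,X)<t\text{ has a unique closest point in }\overline X\}$; $\widetilde X=X+B(0,\tau_X/2)$; for $u\in\widetilde X$, $u_{NN}$ is the unique closest point to $u$ in $\overline X$, and it is a known fact that $\|u_{NN}-v_{NN}\|\le2\|u-v\|$ for all $u,v\in\widetilde X$. $\varepsilon\in(0,1)$. $S_X=\overline{\{(x-y)/\|x-y\|:x\ne y\in X\}}$. A linear $\Pi$ provides $\eta$-convex hull distortion for $T\subseteq S^{d-1}$ if $|\,\|\Pi x\|-\|x\|\,|<\eta$ for all $x\in\operatorname{conv}(T)$. $\mathcal C=\{w_1,\ldots,w_\ell\}\subseteq S_X$ is finite with every $v\in S_X$ within distance $<\varepsilon/40$ of some $w_i$; $\Pi\in\mathbb{R}^{m\times d}$ provides $\frac{\varepsilon}{240}$-convex hull distortion for $S_X$.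 For $z\in\mathbb{R}^m$, $u\in\widetilde X$, $i=1,\ldots,\ell$: $\tilde g_i(z,u)=\langle z,\Pi w_i\rangle-\langle u-u_{NN},w_i\rangle-\frac{\varepsilon}{30}\|u-u_{NN}\|$, $\tilde g_{\ell+i}(z,u)=\langle u-u_{NN},w_i\rangle-\langle z,\Pi w_i\rangle-\frac{\varepsilon}{30}\|u-u_{NN}\|$; $\widetilde F_u=\{z:\tilde g_i(z,u)\le0\ \forall i\}$; $\beta(u)=\arg\min_{z\in\widetilde F_u}\|z\|$. Hypothesis on $z^*$: $z^*\in\mathbb{R}^m$ is any point with $\|z^*\|\le\|u-u_{NN}\|$ and $\tilde g_i(z^*,u)\le-\frac{\varepsilon}{60}\|u-u_{NN}\|$ for all $i=1,\ldots,2\ell$ (such a point exists). *)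

From HB Require Import structures.
From mathcomp Require Import all_boot all_order all_algebra.
From mathcomp Require Import all_classical all_reals ereal.
Set Implicit Arguments. Unset Strict Implicit. Unset Printing Implicit Defensive.
Import Order.TTheory GRing.Theory Num.Theory.
Local Open Scope classical_set_scope.
Local Open Scope ring_scope.

Section Defs.
Variable R : realType.

Definition dotv n (x y : 'rV[R]_n) : R := \sum_(i < n) x ord0 i * y ord0 i.
Definition enorm n (x : 'rV[R]_n) : R := Num.sqrt (dotv x x).

Definition eclosure n (A : set 'rV[R]_n) : set 'rV[R]_n :=
  [set x | forall e : R, 0 < e -> exists2 y, A y & enorm (x - y) < e].

(* distance from x to A, as an extended real (+oo if A is empty). *)
Definition edist n (x : 'rV[R]_n) (A : set 'rV[R]_n) : \bar R :=
  ereal_inf [set (enorm (x - y))%:E | y in A].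

Definition is_closest n (A : set 'rV[R]_n) (x p : 'rV[R]_n) : Prop :=
  eclosure A p /\ forall q, eclosure A q -> enorm (x - p) <= enorm (x - q).

Definition reach n (X : set 'rV[R]_n) : \bar R :=
  ereal_sup [set t%:E | t in [set t : R | 0 <= t /\
     forall x, (edist x X < t%:E)%E -> exists! p, is_closest X x p]].

Definition Xtilde n (X : set 'rV[R]_n) : set 'rV[R]_n :=
  [set x | exists2 y, X y & ((enorm (x - y))%:E < reach X * (2^-1)%:E)%E].

(* u_NN: the (unique, on X~) closest point of closure X to u. *)
Definition nn n (X : set 'rV[R]_n) (u : 'rV[R]_n) : 'rV[R]_n :=
  xget 0 [set p | is_closest X u p].

Definition SX n (X : set 'rV[R]_n) : set 'rV[R]_n :=
  eclosure [set z | exists x y, [/\ X x, X y, x <> y & z = (enorm (x - y))^-1 *: (x - y)]].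

Definition conv n (T : set 'rV[R]_n) : set 'rV[R]_n :=
  [set x | exists k (c : 'I_k -> R) (p : 'I_k -> 'rV[R]_n),
     (forall i, 0 <= c i) /\ \sum_(i < k) c i = 1 /\ (forall i, T (p i)) /\
     x = \sum_(i < k) c i *: p i].

Definition hull_distortion d m (Pi : 'M[R]_(d, m)) (eta : R) (T : set 'rV[R]_d) :=
  forall x, conv T x -> `| enorm (x *m Pi) - enorm x | < eta.

Definition g1 d m l (X : set 'rV[R]_d) (Pi : 'M[R]_(d, m)) (w : 'I_l -> 'rV[R]_d)
  (eps : R) (i : 'I_l) (z : 'rV[R]_m) (u : 'rV[R]_d) : R :=
  dotv z (w i *m Pi) - dotv (u - nn X u) (w i) - eps / 30 * enorm (u - nn X u).
Definition g2 d m l (X : set 'rV[R]_d) (Pi : 'M[R]_(d, m)) (w : 'I_l -> 'rV[R]_d)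
  (eps : R) (i : 'I_l) (z : 'rV[R]_m) (u : 'rV[R]_d) : R :=
  dotv (u - nn X u) (w i) - dotv z (w i *m Pi) - eps / 30 * enorm (u - nn X u).

Definition Ftilde d m l (X : set 'rV[R]_d) (Pi : 'M[R]_(d, m)) (w : 'I_l -> 'rV[R]_d)
  (eps : R) (u : 'rV[R]_d) : set 'rV[R]_m :=
  [set z | forall i, g1 X Pi w eps i z u <= 0 /\ g2 X Pi w eps i z u <= 0].

(* b is the minimum-norm point of F (beta(u) = argmin over F~_u). *)
Definition is_min_norm m (F : set 'rV[R]_m) (b : 'rV[R]_m) : Prop :=
  F b /\ forall z, F z -> enorm b <= enorm z.

End Defs.

(* The point z_v is a convex combination of beta(u), which satisfies every
   constraint at u, and of z^*, which satisfies every constraint at u with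
   slack eps ||u - u_NN|| / 60.  Each g~_i is affine in z, so at (z_v, u) it
   is at most -delta_v eps ||u - u_NN|| / 60 = -4 ||u - v||.  Moving the base
   point from u to v changes the residual u - u_NN by at most 3 ||u - v||
   (u |-> u_NN is 2-Lipschitz on X~), and g~_i is (1 + eps/30)-Lipschitz in the
   residual because ||w_i|| <= 1.  Hence g~_i(z_v, v) <= -4t + 3t + eps t / 10
   <= 0 with t = ||u - v||. *)
From HB Require Import structures.
From mathcomp Require Import all_boot all_order all_algebra.
From mathcomp Require Import all_classical all_reals ereal.
From mathcomp Require Import ring lra.
Import Order.TTheory GRing.Theory Num.Theory.
Set Implicit Arguments. Unset Strict Implicit.
Local Open Scope classical_set_scope.
Local Open Scope ring_scope.

Section EuclideanNorm.
Variables (R : realType) (n : nat).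
Implicit Types x y z : 'rV[R]_n.

Lemma dotvDl x y z : dotv (x + y) z = dotv x z + dotv y z.
Proof. rewrite /dotv -big_split /=; apply: eq_bigr => i _; rewrite !mxE; ring. Qed.

Lemma dotvZl (c : R) x z : dotv (c *: x) z = c * dotv x z.
Proof. rewrite /dotv mulr_sumr; apply: eq_bigr => i _; rewrite !mxE; ring. Qed.

Lemma dotvNl x z : dotv (- x) z = - dotv x z.
Proof. by rewrite -scaleN1r dotvZl mulN1r. Qed.

Lemma dotvBl x y z : dotv (x - y) z = dotv x z - dotv y z.
Proof. by rewrite dotvDl dotvNl. Qed.

Lemma dotvC x y : dotv x y = dotv y x.
Proof. by apply: eq_bigr => i _; rewrite mulrC. Qed.

Lemma dotv_ge0 x : 0 <= dotv x x.
Proof. by apply: sumr_ge0 => i _; rewrite -expr2 sqr_ge0. Qed.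

Lemma dotv_eq0 x : (dotv x x == 0) = (x == 0).
Proof.
apply/idP/eqP => [|->]; last by rewrite -(scale0r 0) dotvZl mul0r.
rewrite /dotv psumr_eq0 => [/allP x0|i _]; last by rewrite -expr2 sqr_ge0.
apply/rowP => i; rewrite mxE; apply/eqP; rewrite -sqrf_eq0 expr2.
by have := x0 i (mem_index_enum _).
Qed.

Lemma enorm_ge0 x : 0 <= enorm x.
Proof. exact: sqrtr_ge0. Qed.

Lemma enorm_sqr x : enorm x ^+ 2 = dotv x x.
Proof. by rewrite sqr_sqrtr // dotv_ge0. Qed.

Lemma enorm_eq0 x : (enorm x == 0) = (x == 0).
Proof. by rewrite -sqrf_eq0 enorm_sqr dotv_eq0. Qed.

Lemma enormZ (c : R) x : enorm (c *: x) = `|c| * enorm x.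
Proof.
by rewrite /enorm dotvZl dotvC dotvZl mulrA sqrtrM ?sqr_ge0 // -expr2 sqrtr_sqr.
Qed.

Lemma enormN x : enorm (- x) = enorm x.
Proof. by rewrite -scaleN1r enormZ normrN normr1 mul1r. Qed.

Lemma ler_dotv x y : dotv x y <= enorm x * enorm y.
Proof.
have [x0|nx0] := eqVneq x 0; first by rewrite x0 -(scale0r 0) dotvZl mul0r
  mulr_ge0 ?enorm_ge0.
have [y0|ny0] := eqVneq y 0; first by rewrite y0 dotvC -(scale0r 0) dotvZl
  mul0r mulr_ge0 ?enorm_ge0.
have nxy_gt0 : 0 < enorm x * enorm y.
  by rewrite mulr_gt0 // lt_def enorm_ge0 enorm_eq0 ?nx0 ?ny0.
(* 0 <= || |y| x - |x| y ||^2 = 2 |x| |y| (|x| |y| - <x, y>) *)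
have := dotv_ge0 (enorm y *: x - enorm x *: y).
rewrite !dotvBl !(dotvC _ (_ - _)) !dotvBl !dotvZl !(dotvC _ (_ *: _)) !dotvZl.
rewrite -!enorm_sqr (dotvC y x); nra.
Qed.

Lemma ler_norm_dotv x y : `|dotv x y| <= enorm x * enorm y.
Proof. by rewrite ler_norml ler_dotv andbT -lerNl -dotvNl -(enormN x) ler_dotv. Qed.

Lemma ler_enormD x y : enorm (x + y) <= enorm x + enorm y.
Proof.
rewrite -(ler_pXn2r (_ : 0 < 2)%N) ?nnegrE ?addr_ge0 ?enorm_ge0 //.
rewrite enorm_sqr dotvDl !(dotvC _ (_ + _)) !dotvDl -!enorm_sqr (dotvC y x).
have := ler_dotv x y; lra.
Qed.

Lemma ler_enormB x y : enorm (x - y) <= enorm x + enorm y.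
Proof. by rewrite -(enormN y) ler_enormD. Qed.

Lemma lerB_enorm x y : enorm x - enorm y <= enorm (x - y).
Proof. by rewrite lerBlDr -{1}(subrK y x) ler_enormD. Qed.

End EuclideanNorm.

Lemma SX_enorm_le1 (R : realType) d (X : set 'rV[R]_d) w : SX X w -> enorm w <= 1.
Proof.
move=> SXw; rewrite leNgt; apply/negP => w_gt1.
have gap_gt0 : 0 < enorm w - 1 by rewrite subr_gt0.
have [_ [x [y [_ _ xy ->]]]] := SXw _ gap_gt0.
have xy0 : enorm (x - y) != 0 by rewrite enorm_eq0 subr_eq0; apply/eqP.
have unit_chord : enorm ((enorm (x - y))^-1 *: (x - y)) = 1.
  by rewrite enormZ ger0_norm ?invr_ge0 ?enorm_ge0 // mulVf.
have := lerB_enorm w ((enorm (x - y))^-1 *: (x - y)); rewrite unit_chord; lra.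
Qed.

Lemma enorm_residualB (R : realType) d (u v p q : 'rV[R]_d) :
  enorm (p - q) <= 2 * enorm (u - v) ->
  enorm ((u - p) - (v - q)) <= 3 * enorm (u - v).
Proof.
have -> : (u - p) - (v - q) = (u - v) - (p - q).
  by apply/rowP => i; rewrite !mxE; ring.
by have := ler_enormB (u - v) (p - q); lra.
Qed.

Lemma dotv_enorm_shift_le (R : realType) n (eps : R) (A B w : 'rV[R]_n) :
  0 <= eps -> enorm w <= 1 ->
  `|dotv A w - dotv B w| + eps / 30 * (enorm A - enorm B)
  <= (1 + eps / 30) * enorm (A - B).
Proof.
move=> eps0 w_le1; rewrite -dotvBl mulrDl mul1r.
apply: lerD; last by rewrite ler_wpM2l ?lerB_enorm // divr_ge0.
by rewrite -[leRHS]mulr1 (le_trans (ler_norm_dotv _ _)) // ler_wpM2l ?enorm_ge0.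
Qed.

Section Constraints.
Variables (R : realType) (d m l : nat) (X : set 'rV[R]_d).
Variables (Pi : 'M[R]_(d, m)) (w : 'I_l -> 'rV[R]_d) (eps : R).

Lemma g1_affine i s (b z : 'rV[R]_m) u :
  g1 X Pi w eps i ((1 - s) *: b + s *: z) u
  = (1 - s) * g1 X Pi w eps i b u + s * g1 X Pi w eps i z u.
Proof. by rewrite /g1 (dotvDl ((1 - s) *: b)) !dotvZl; ring. Qed.

Lemma g2_affine i s (b z : 'rV[R]_m) u :
  g2 X Pi w eps i ((1 - s) *: b + s *: z) u
  = (1 - s) * g2 X Pi w eps i b u + s * g2 X Pi w eps i z u.
Proof. by rewrite /g2 (dotvDl ((1 - s) *: b)) !dotvZl; ring. Qed.

Hypothesis eps_ge0 : 0 <= eps.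

Lemma g1_shift_le i z (u v : 'rV[R]_d) : enorm (w i) <= 1 ->
  g1 X Pi w eps i z v
  <= g1 X Pi w eps i z u + (1 + eps / 30) * enorm ((u - nn X u) - (v - nn X v)).
Proof.
move=> /(dotv_enorm_shift_le (u - nn X u) (v - nn X v) eps_ge0); rewrite /g1.
set dA := dotv (u - _) _; set dB := dotv (v - _) _.
by have := ler_norm (dA - dB); lra.
Qed.

Lemma g2_shift_le i z (u v : 'rV[R]_d) : enorm (w i) <= 1 ->
  g2 X Pi w eps i z v
  <= g2 X Pi w eps i z u + (1 + eps / 30) * enorm ((u - nn X u) - (v - nn X v)).
Proof.
move=> /(dotv_enorm_shift_le (u - nn X u) (v - nn X v) eps_ge0); rewrite /g2.
set dA := dotv (u - _) _; set dB := dotv (v - _) _.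
by have := ler_norm (dB - dA); rewrite distrC; lra.
Qed.

End Constraints.

(* [s] is delta_v, [a] is ||u - u_NN||, [t] is ||u - v||, and [gb], [gz],
   [gv] are one constraint evaluated at (beta(u), u), (z^*, u) and (z_v, v). *)
Lemma perturbed_constraint_le0 (R : realFieldType) (eps a t s gb gz gv : R) :
  0 < eps < 1 -> 0 <= t -> 0 <= s <= 1 -> s * (eps * a) = 240 * t ->
  gb <= 0 -> gz <= - (eps / 60 * a) ->
  gv <= (1 - s) * gb + s * gz + (1 + eps / 30) * (3 * t) -> gv <= 0.
Proof.
move=> /andP[eps0 eps1] t0 /andP[s0 s1] sea gb0 gz_slack gv_le.
have gb_part : (1 - s) * gb <= 0 by rewrite mulr_ge0_le0 // subr_ge0.
have gz_part : s * gz <= s * - (eps / 60 * a) by rewrite ler_wpM2l.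
rewrite (_ : s * - _ = - (s * (eps * a)) / 60) in gz_part; last by ring.
rewrite sea in gz_part.
have eps_t : eps * t <= t by rewrite ler_piMl // ltW.
lra.
Qed.

Theorem lemma4p4 (R : realType) (d m l : nat) (X : set 'rV[R]_d) (eps : R)
  (w : 'I_l -> 'rV[R]_d) (Pi : 'M[R]_(d, m))
  (u : 'rV[R]_d) (zs bu : 'rV[R]_m) :
  (0 < reach X)%E ->
  (forall a b, Xtilde X a -> Xtilde X b ->
     enorm (nn X a - nn X b) <= 2 * enorm (a - b)) ->
  0 < eps < 1 ->
  (forall i, SX X (w i)) ->
  (forall v, SX X v -> exists i, enorm (v - w i) < eps / 40) ->
  hull_distortion Pi (eps / 240) (SX X) ->
  Xtilde X u -> ~ eclosure X u ->
  enorm zs <= enorm (u - nn X u) ->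
  (forall i, g1 X Pi w eps i zs u <= - (eps / 60 * enorm (u - nn X u)) /\
             g2 X Pi w eps i zs u <= - (eps / 60 * enorm (u - nn X u))) ->
  is_min_norm (Ftilde X Pi w eps u) bu ->
  let r_u := Num.min 1 (eps * enorm (u - nn X u) / 480) in
  forall v, Xtilde X v -> enorm (u - v) < r_u ->
  let delta := 240 * enorm (u - v) / (eps * enorm (u - nn X u)) in
  let zv := (1 - delta) *: bu + delta *: zs in
  Ftilde X Pi w eps v zv /\
  (forall bv, is_min_norm (Ftilde X Pi w eps v) bv -> enorm bv <= enorm zv).
Proof.
move=> _ nn_lip eps01 SXw _ _ Xu _ _ zs_slack [Fbu _] r_u v Xv + delta zv.
rewrite lt_min => /andP[_ uv_lt].
suff Fzv : Ftilde X Pi w eps v zv by split=> // bv [_ /(_ zv Fzv)].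
set a := enorm (u - nn X u) in zs_slack uv_lt delta zv *.
set t := enorm (u - v) in uv_lt delta zv *.
have t0 : 0 <= t := enorm_ge0 _.
have eps0 : 0 <= eps by case/andP: eps01 => /ltW.
have ea_gt0 : 0 < eps * a by lra.
have delta_ea : delta * (eps * a) = 240 * t by rewrite divfK // gt_eqF.
have delta01 : 0 <= delta <= 1.
  apply/andP; split; rewrite /delta.
  - by apply: divr_ge0 (ltW ea_gt0); lra.
  - by rewrite ler_pdivrMr // mul1r; lra.
have res_le : (1 + eps / 30) * enorm ((u - nn X u) - (v - nn X v))
              <= (1 + eps / 30) * (3 * t).
  by rewrite ler_wpM2l ?enorm_residualB ?nn_lip //; lra.
move=> i; have w_le1 := SX_enorm_le1 (SXw i).
have [bu1 bu2] := Fbu i; have [zs1 zs2] := zs_slack i; split.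
- apply: (perturbed_constraint_le0 eps01 t0 delta01 delta_ea bu1 zs1).
  rewrite -g1_affine; apply: le_trans (g1_shift_le X Pi eps0 zv u v w_le1) _.
  by rewrite lerD2l.
- apply: (perturbed_constraint_le0 eps01 t0 delta01 delta_ea bu2 zs2).
  rewrite -g2_affine; apply: le_trans (g2_shift_le X Pi eps0 zv u v w_le1) _.
  by rewrite lerD2l.
Qed.
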